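(* In the setting described in the context, every feasible solution $(\alpha,c,u,\pi,\lambda,\mu)$ of RLO-IU-SD satisfies, for some $\hat{i}\in I$, \[ \sum_{j\in J}a_{\hat{i}j}\hat{x}_j-\sum_{j\in J_{\hat{i}}}\alpha_{\hat{i}j}|\hat{x}_j|=b_{\hat{i}},\quad \sum_{j\in J}a_{ij}\hat{x}_j-\sum_{j\in J_i}\alpha_{ij}|\hat{x}_j|\ge b_i\ \ \forall i\in I,\quad \alpha_{ij}\ge0\ \ \forall j\in J_i,i\in I. \] Conversely, for every $\alpha$ satisfying these three conditions for some $\hat{i}\in I$, there exists $(c,u,\pi,\lambda,\mu)$ such that $(\alpha,c,u,\pi,\lambda,\mu)$ is feasible for RLO-IU-SD.
   Context: Let $I=\{1,\dots,m\}$, $J=\{1,\dots,n\}$. Given are $a_{ij}\in\mathbb{R}$, $b\in\mathbb{R}^m$, nonempty index sets $J_i\subseteq J$ ($i\in I$), an observed point $\hat{x}\in\mathbb{R}^n$, prior vectors $\hat{\alpha}_i\in\mathbb{R}^{|J_i|}$, real weights $\xi_i$, and a norm $\|\cdot\|$. The problem RLO-IU-SD is \[ \min_{\alpha,c,u,\pi,\lambda,\mu}\ \sum_{i\in I}\xi_i\|\alpha_i-\hat{\alpha}_i\| \] subject to: $\sum_{j\in J}c_j\hat{x}_j-\sum_{i\in I}b_i\pi_i=0$; $\alpha_{ij}\hat{x}_j+u_{ij}\ge0$ and $-\alpha_{ij}\hat{x}_j+u_{ij}\ge0$ for all $j\in J_i,i\in I$; $\sum_{j\in J}a_{ij}\hat{x}_j-\sum_{j\in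 J_i}u_{ij}\ge b_i$ for all $i\in I$; $\alpha_{ij}\ge0$ for all $j\in J_i,i\in I$; $\sum_{i\in I}\pi_i=1$; $\sum_{i\in I}a_{ij}\pi_i+\sum_{i\in I:j\in J_i}\alpha_{ij}(\lambda_{ij}-\mu_{ij})=c_j$ for all $j\in J$; $\pi_i=\lambda_{ij}+\mu_{ij}$ for all $j\in J_i,i\in I$; $\pi_i,\lambda_{ij},\mu_{ij}\ge0$ for all $j\in J_i,i\in I$. Here $\alpha_i=(\alpha_{ij})_{j\in J_i}$, $c\in\mathbb{R}^n$, $\pi\in\mathbb{R}^m$. *)

From HB Require Import structures.
From mathcomp Require Import all_boot all_order all_algebra.
Set Implicit Arguments. Unset Strict Implicit. Unset Printing Implicit Defensive.
Import Order.TTheory GRing.Theory Num.Theory.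
Local Open Scope ring_scope.

(* Variables indexed by pairs (i,j) with j in J_i are encoded as functions
   'I_m -> 'I_n -> R; only the entries with j \in JJ i are ever used. *)
Definition rlo_iu_sd_feasible (R : realFieldType) (m n : nat)
  (a : 'I_m -> 'I_n -> R) (b : 'I_m -> R) (JJ : 'I_m -> {set 'I_n})
  (xh : 'I_n -> R)
  (alpha : 'I_m -> 'I_n -> R) (c : 'I_n -> R) (u : 'I_m -> 'I_n -> R)
  (pi : 'I_m -> R) (lam mu : 'I_m -> 'I_n -> R) : Prop :=
  (\sum_(j < n) c j * xh j - \sum_(i < m) b i * pi i = 0) /\
  (forall i j, j \in JJ i ->
     0 <= alpha i j * xh j + u i j /\ 0 <= - (alpha i j * xh j) + u i j) /\
  (forall i, b i <= \sum_(j < n) a i j * xh j - \sum_(j in JJ i) u i j) /\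
  (forall i j, j \in JJ i -> 0 <= alpha i j) /\
  (\sum_(i < m) pi i = 1) /\
  (forall j, \sum_(i < m) a i j * pi i
             + \sum_(i < m | j \in JJ i) alpha i j * (lam i j - mu i j) = c j) /\
  (forall i j, j \in JJ i -> pi i = lam i j + mu i j) /\
  (forall i, 0 <= pi i) /\
  (forall i j, j \in JJ i -> 0 <= lam i j /\ 0 <= mu i j).

Definition lemma4_cond (R : realFieldType) (m n : nat)
  (a : 'I_m -> 'I_n -> R) (b : 'I_m -> R) (JJ : 'I_m -> {set 'I_n})
  (xh : 'I_n -> R) (alpha : 'I_m -> 'I_n -> R) (ih : 'I_m) : Prop :=
  [/\ \sum_(j < n) a ih j * xh j - \sum_(j in JJ ih) alpha ih j * `|xh j| = b ih,
      (forall i, b i <= \sum_(j < n) a i j * xh j - \sum_(j in JJ i) alpha i j * `|xh j|) &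
      (forall i j, j \in JJ i -> 0 <= alpha i j)].

From HB Require Import structures.
From mathcomp Require Import all_boot all_order all_algebra.
From mathcomp Require Import ring lra.
Set Implicit Arguments.
Unset Strict Implicit.
Unset Printing Implicit Defensive.

Import Order.TTheory GRing.Theory Num.Theory.
Local Open Scope ring_scope.

(** Weak-duality bookkeeping: the duality gap [c x - b pi] of a feasible
   solution equals [sum_i pi_i * slack_i] plus nonnegative terms
   [alpha_ij (lam_ij (|x_j| + x_j) + mu_ij (|x_j| - x_j))], where [slack_i] is
   the slack of row [i] of the robust counterpart
   [a_i x - sum_(j in J_i) alpha_ij |x_j| >= b_i]; the constraints
   [|alpha_ij x_j| <= u_ij] make every slack nonnegative.  The gap vanishes
   and the weights [pi] sum to [1], so some row with [pi_i > 0] is tight.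
   Conversely, if row [ih] is tight, [pi] the indicator of [ih] and
   [lam, mu] supported on the sign of [x] close the gap exactly. *)

Lemma duality_gapE (R : comPzRingType) (m n : nat)
    (a : 'I_m -> 'I_n -> R) (b : 'I_m -> R) (JJ : 'I_m -> {set 'I_n})
    (xh : 'I_n -> R) (pi : 'I_m -> R) (d : 'I_m -> 'I_n -> R) :
  \sum_(j < n) (\sum_(i < m) a i j * pi i + \sum_(i < m | j \in JJ i) d i j) * xh j
    - \sum_(i < m) b i * pi i
  = \sum_(i < m) (pi i * (\sum_(j < n) a i j * xh j - b i)
                  + \sum_(j in JJ i) d i j * xh j).
Proof.
under eq_bigr => j _ do rewrite mulrDl.
rewrite big_split [RHS]big_split /= addrAC; congr (_ + _).
  under eq_bigr => j _ do rewrite mulr_suml.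
  rewrite exchange_big /= -sumrB; apply: eq_bigr => i _.
  rewrite mulrBr mulr_sumr [pi i * b i]mulrC; congr (_ - _).
  by apply: eq_bigr => j _; rewrite mulrAC mulrC.
under eq_bigr => j _ do rewrite mulr_suml big_mkcond /=.
rewrite exchange_big /=; apply: eq_bigr => i _.
rewrite [RHS]big_mkcond /=; apply: eq_bigr => j _.
by case: ifP => _; rewrite ?mul0r.
Qed.

Lemma exists_eq0_of_weighted_sum_le0 (R : numDomainType) (m : nat)
    (w s : 'I_m -> R) :
    (forall i, 0 <= w i) -> \sum_(i < m) w i != 0 -> (forall i, 0 <= s i) ->
  \sum_(i < m) w i * s i <= 0 -> exists i, s i = 0.
Proof.
move=> w_ge0 sumw_neq0 s_ge0 sum_le0.
have /eqP : \sum_(i < m) w i * s i = 0.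
  by apply/eqP; rewrite eq_le sum_le0 sumr_ge0 // => i _; rewrite mulr_ge0.
rewrite psumr_eq0 => [/allP ws0|i _]; last by rewrite mulr_ge0.
have [i wi_neq0] : exists i, w i != 0.
  apply/existsP; apply: contraNT sumw_neq0; rewrite negb_exists => /forallP w0.
  by apply/eqP/big1 => i _; apply/eqP; rewrite -[_ == _]negbK w0.
exists i; apply/eqP; move: (ws0 i (mem_index_enum i)).
by rewrite mulf_eq0 (negbTE wi_neq0).
Qed.

Lemma mul_norm_leP (R : realDomainType) (al x v : R) : 0 <= al ->
  reflect (0 <= al * x + v /\ 0 <= - (al * x) + v) (al * `|x| <= v).
Proof.
move=> al_ge0; have -> : al * `|x| = `|al * x| by rewrite normrM ger0_norm.
rewrite ler_norml.
by apply: (iffP andP) => -[h1 h2]; split; lra.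
Qed.

Lemma sign_split_lower_bound (R : realDomainType) (al l mu x : R) :
  0 <= al -> 0 <= l -> 0 <= mu -> - ((l + mu) * (al * `|x|)) <= al * (l - mu) * x.
Proof.
move=> al_ge0 l_ge0 mu_ge0; rewrite -subr_ge0.
have -> : al * (l - mu) * x - - ((l + mu) * (al * `|x|))
          = al * (l * (`|x| + x) + mu * (`|x| - x)) by ring.
have := ler_norm x; have := ler_norm (- x); rewrite normrN => Nx_le_norm x_le_norm.
have normDx_ge0 : 0 <= `|x| + x by lra.
have normBx_ge0 : 0 <= `|x| - x by lra.
by rewrite mulr_ge0 // addr_ge0 // mulr_ge0.
Qed.

Lemma sign_split_mul (R : realDomainType) (x : R) :
  ((x < 0)%R%:R - (0 <= x)%R%:R) * x = - `|x|.
Proof.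
case: ltrP => [x_lt0|x_ge0]; first by rewrite ltr0_norm //= subr0 mul1r opprK.
by rewrite ger0_norm //= sub0r mulN1r.
Qed.

Section RobustCounterpart.

Variables (R : realFieldType) (m n : nat).
Variables (a : 'I_m -> 'I_n -> R) (b : 'I_m -> R) (JJ : 'I_m -> {set 'I_n}).
Variable xh : 'I_n -> R.

Definition robust_slack (alpha : 'I_m -> 'I_n -> R) (i : 'I_m) : R :=
  \sum_(j < n) a i j * xh j - \sum_(j in JJ i) alpha i j * `|xh j| - b i.

Lemma lemma4_condP (alpha : 'I_m -> 'I_n -> R) ih :
  lemma4_cond a b JJ xh alpha ih <->
  [/\ robust_slack alpha ih = 0, forall i, 0 <= robust_slack alpha i
    & forall i j, j \in JJ i -> 0 <= alpha i j].
Proof.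
rewrite /robust_slack; split=> -[tight rows alpha_ge0].
  by split=> // [|i]; rewrite ?tight ?subrr ?subr_ge0.
split=> // [|i]; last by rewrite -subr_ge0.
by apply/eqP; rewrite -subr_eq0; apply/eqP.
Qed.

Lemma weighted_slack_le (alpha : 'I_m -> 'I_n -> R) (pi : 'I_m -> R)
    (lam mu : 'I_m -> 'I_n -> R) i :
    (forall j, j \in JJ i -> 0 <= alpha i j) ->
    (forall j, j \in JJ i -> pi i = lam i j + mu i j) ->
    (forall j, j \in JJ i -> 0 <= lam i j /\ 0 <= mu i j) ->
  pi i * robust_slack alpha i
    <= pi i * (\sum_(j < n) a i j * xh j - b i)
       + \sum_(j in JJ i) alpha i j * (lam i j - mu i j) * xh j.
Proof.
move=> alpha_ge0 pi_split lam_mu_ge0.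
rewrite /robust_slack addrAC mulrDr lerD2l mulrN mulr_sumr -sumrN.
apply: ler_sum => j Jj; rewrite (pi_split j Jj).
have [lam_ge0 mu_ge0] := lam_mu_ge0 j Jj.
exact: sign_split_lower_bound (alpha_ge0 j Jj) lam_ge0 mu_ge0.
Qed.

Definition indicator (ih : 'I_m) (i : 'I_m) : R := (i == ih)%:R.

Definition neg_part_weight (pi : 'I_m -> R) (i : 'I_m) (j : 'I_n) : R :=
  pi i * (xh j < 0)%R%:R.

Definition pos_part_weight (pi : 'I_m -> R) (i : 'I_m) (j : 'I_n) : R :=
  pi i * (0 <= xh j)%R%:R.

Lemma weighted_slack_sign_split (alpha : 'I_m -> 'I_n -> R) pi i :
  pi i * robust_slack alpha i
    = pi i * (\sum_(j < n) a i j * xh j - b i)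
      + \sum_(j in JJ i) alpha i j
          * (neg_part_weight pi i j - pos_part_weight pi i j) * xh j.
Proof.
rewrite /robust_slack addrAC mulrDr mulrN mulr_sumr -sumrN; congr (_ + _).
apply: eq_bigr => j _; rewrite /neg_part_weight /pos_part_weight -mulrBr.
by rewrite -!mulrA sign_split_mul; ring.
Qed.

Lemma feasible_robust_tight alpha c u pi lam mu :
  rlo_iu_sd_feasible a b JJ xh alpha c u pi lam mu ->
  exists ih, lemma4_cond a b JJ xh alpha ih.
Proof.
move=> [gap0 [u_bound [rows [alpha_ge0 [pi_sum1 [c_def [pi_split [pi_ge0 lam_mu_ge0]]]]]]]].
have slack_ge0 i : 0 <= robust_slack alpha i.
  rewrite subr_ge0; apply: le_trans (rows i) _; rewrite lerD2l lerN2.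
  by apply: ler_sum => j Jj; apply/mul_norm_leP; [exact: alpha_ge0 | exact: u_bound].
have weighted_le0 : \sum_(i < m) pi i * robust_slack alpha i <= 0.
  rewrite -[leRHS]gap0; under [X in _ <= X - _]eq_bigr => j _ do rewrite -c_def.
  rewrite duality_gapE; apply: ler_sum => i _.
  by apply: weighted_slack_le; [exact: alpha_ge0 | exact: pi_split | exact: lam_mu_ge0].
have pi_sum_neq0 : \sum_(i < m) pi i != 0 by rewrite pi_sum1 oner_neq0.
have [ih tight] :=
  exists_eq0_of_weighted_sum_le0 pi_ge0 pi_sum_neq0 slack_ge0 weighted_le0.
by exists ih; apply/lemma4_condP.
Qed.

Lemma robust_tight_feasible alpha ih :
  lemma4_cond a b JJ xh alpha ih ->
  exists c u pi lam mu, rlo_iu_sd_feasible a b JJ xh alpha c u pi lam mu.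
Proof.
move=> /lemma4_condP[tight slack_ge0 alpha_ge0].
pose pi := indicator ih.
pose lam := neg_part_weight pi; pose mu := pos_part_weight pi.
have pi_sum F : \sum_(i < m) pi i * F i = F ih.
  rewrite (bigD1 ih) //= big1 => [|i /negbTE neq]; last by rewrite /pi /indicator neq mul0r.
  by rewrite /pi /indicator eqxx mul1r addr0.
exists (fun j => \sum_(i < m) a i j * pi i
                 + \sum_(i < m | j \in JJ i) alpha i j * (lam i j - mu i j)).
exists (fun i j => alpha i j * `|xh j|), pi, lam, mu.
split.
  rewrite duality_gapE.
  under eq_bigr => i _ do rewrite -weighted_slack_sign_split.
  by rewrite pi_sum.
split.
  by move=> i j Jj; apply/mul_norm_leP; [exact: alpha_ge0 | rewrite lexx].
split; first by move=> i; have := slack_ge0 i; rewrite subr_ge0.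
split; first exact: alpha_ge0.
split; first by rewrite -[RHS](pi_sum (fun=> 1)); apply: eq_bigr => i; rewrite mulr1.
split; first by [].
split.
  move=> i j _; rewrite /lam /mu /neg_part_weight /pos_part_weight -mulrDr.
  by case: ltrP; rewrite ?addr0 ?add0r mulr1.
split; first by move=> i; rewrite /pi /indicator ler0n.
by move=> i j _; rewrite /lam /mu /neg_part_weight /pos_part_weight /pi /indicator;
  split; apply: mulr_ge0; rewrite ler0n.
Qed.

End RobustCounterpart.

Theorem lemma4 (R : realFieldType) (m n : nat)
  (a : 'I_m -> 'I_n -> R) (b : 'I_m -> R) (JJ : 'I_m -> {set 'I_n})
  (xh : 'I_n -> R)
  (hJ : forall i, JJ i != set0) :
  (forall alpha c u pi lam mu,
     rlo_iu_sd_feasible a b JJ xh alpha c u pi lam mu ->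
     exists ih, lemma4_cond a b JJ xh alpha ih) /\
  (forall alpha, (exists ih, lemma4_cond a b JJ xh alpha ih) ->
     exists c u pi lam mu, rlo_iu_sd_feasible a b JJ xh alpha c u pi lam mu).
Proof.
split; first exact: feasible_robust_tight.
by move=> alpha [ih]; apply: robust_tight_feasible.
Qed.
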